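(* For all $n\ge1$, \[a_n(132,\emptyset,\{3\})=a_n(132,\emptyset,\{1,3\})=\sum_{k=1}^{n}(k-1)!\,(n-k)!.\]
   Context: For $n\ge1$, $\mathcal S_n$ is the set of permutations $\pi=\pi_1\cdots\pi_n$ of $[n]$. A bi-vincular pattern of length $k$ is a triple $p=(\sigma,X,Y)$ with $\sigma\in\mathcal S_k$ and $X,Y\subseteq\{0,1,\dots,k\}$. A permutation $\pi\in\mathcal S_n$ contains $p$ if there are indices $1\le i_1<\dots<i_k\le n$ such that $(\pi_{i_1},\dots,\pi_{i_k})$ is order-isomorphic to $\sigma$ and, letting $j_1<\dots<j_k$ be the values $\pi_{i_1},\dots,\pi_{i_k}$ sorted increasingly and setting $i_0=j_0=0$, $i_{k+1}=j_{k+1}=n+1$, one has $i_{x+1}=i_x+1$ for all $x\in X$ and $j_{y+1}=j_y+1$ for all $y\in Y$. Otherwise $\pi$ avoids $p$; $a_n(p)$ is the number of $\pi\in\mathcal S_n$ avoiding $p$. *)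

From mathcomp Require Import all_boot all_fingroup.
Set Implicit Arguments. Unset Strict Implicit. Unset Printing Implicit Defensive.

(* Permutations of [n] are modelled as 'S_n = {perm 'I_n}; position p (0-based)
   corresponds to position p+1, value v (0-based) to value v+1. *)

Record bivinc (k : nat) := BiVinc {
  bv_sigma : 'S_k;
  bv_X : {set 'I_k.+1};
  bv_Y : {set 'I_k.+1} }.

Section Contain.
Variables (n k : nat).

(* i_x with i_0 = 0, i_{k+1} = n+1, and i_x (1<=x<=k) the 1-based position *)
Definition ext_pos (idx : 'I_k -> 'I_n) (x : nat) : nat :=
  if x == 0 then 0
  else if x <= k then nth 0 [seq (nat_of_ord (idx a)).+1 | a <- enum 'I_k] x.-1
  else n.+1.

(* j_y: the values pi_{i_1},...,pi_{i_k} (1-based) sorted increasingly,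
   with j_0 = 0 and j_{k+1} = n+1 *)
Definition ext_val (pi : 'S_n) (idx : 'I_k -> 'I_n) (y : nat) : nat :=
  let vals := sort leq [seq (nat_of_ord (pi (idx a))).+1 | a <- enum 'I_k] in
  if y == 0 then 0
  else if y <= k then nth 0 vals y.-1 else n.+1.

Definition occurrence (pi : 'S_n) (p : bivinc k) (idx : 'I_k -> 'I_n) : bool :=
  [&& [forall a : 'I_k, forall b : 'I_k, (a < b) ==> (idx a < idx b)],
      [forall a : 'I_k, forall b : 'I_k,
         (pi (idx a) < pi (idx b)) == (bv_sigma p a < bv_sigma p b)],
      [forall x in bv_X p, ext_pos idx x.+1 == (ext_pos idx x).+1] &
      [forall y in bv_Y p, ext_val pi idx y.+1 == (ext_val pi idx y).+1]].

Definition contains (pi : 'S_n) (p : bivinc k) : bool :=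
  [exists idx : {ffun 'I_k -> 'I_n}, occurrence pi p idx].

End Contain.

Definition avoid_count (n k : nat) (p : bivinc k) : nat :=
  #|[set pi : 'S_n | ~~ contains pi p]|.

(* the classical pattern 132, in 0-based values: 0 2 1 *)
Definition p132 : 'S_3 := tperm (inord 1 : 'I_3) (inord 2).

Definition pat (X Y : seq nat) : bivinc 3 :=
  BiVinc p132 [set x : 'I_4 | val x \in X] [set y : 'I_4 | val y \in Y].

From mathcomp Require Import all_boot all_fingroup zify.
Set Implicit Arguments. Unset Strict Implicit. Unset Printing Implicit Defensive.

(* Once the values of an occurrence of 132 are sorted, the condition {3} says
   that its "3" is the largest value n.  Hence a permutation avoids
   (132, {}, {3}) iff, n sitting at position m, every entry before n exceeds
   every entry after it; the entries before n are then the m values just below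
   n, and such a permutation is determined by the orders of its two blocks:
   there are m! (n-1-m)! of them.  Requiring also {1} changes nothing: if
   pi_i < pi_l with i < j < l and pi_j = n, the positions of the values
   pi_i, pi_i + 1, ..., pi_l start left of j and end right of it, so two
   consecutive values lie on either side of n. *)

Lemma forall_enum (T : finType) (P : pred T) : [forall x, P x] = all P (enum T).
Proof. by apply/forallP/allP => [Px x _ | Px x]; last apply: Px; rewrite ?mem_enum. Qed.

Lemma forall_in_val_set k (P : pred nat) (Y : seq nat) :
  all (fun y => y < k) Y -> [forall y in [set y : 'I_k | val y \in Y], P y] = all P Y.
Proof.
move=> /allP Yk; apply/forall_inP/allP => [PY y yY | PY y]; last by rewrite inE => /PY.
by have := PY (Ordinal (Yk y yY)); rewrite inE; apply.
Qed.

Lemma sort_leq3 a b c : a <= b <= c -> sort leq [:: a; c; b] = [:: a; b; c].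
Proof.
move=> /andP[ab bc]; apply: (sorted_eq leq_trans anti_leq (sort_sorted leq_total _)).
  by rewrite /= ab bc.
by rewrite perm_sort perm_cons (perm_catC [:: c] [:: b]).
Qed.

Lemma exists_pred_switch (P : pred nat) a b : a <= b -> P a -> ~~ P b ->
  exists2 v, a <= v < b & P v && ~~ P v.+1.
Proof.
elim: b => [|b IHb] le_ab Pa nPb.
  by move: nPb; rewrite leqn0 in le_ab; rewrite -(eqP le_ab) Pa.
have le_ab' : a <= b.
  by rewrite -ltnS ltn_neqAle le_ab andbT; apply: contraNneq nPb => <-.
have [Pb|nPb'] := boolP (P b); first by exists b; rewrite ?le_ab' ?ltnSn ?Pb.
have [v /andP[le_av lt_vb] Pv] := IHb le_ab' Pa nPb'.
by exists v; rewrite // le_av ltnS ltnW.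
Qed.

Lemma card_ord_ltn N k : k <= N -> #|[set x : 'I_N | x < k]| = k.
Proof.
move=> leKN; have widen_inj : injective (widen_ord leKN).
  by move=> a b /(congr1 val) /= /val_inj.
rewrite -[RHS](card_ord k) -(card_imset _ widen_inj).
apply: eq_card => x; rewrite inE; apply/idP/imsetP => [xk|[y _ ->]]; last exact: (ltn_ord y).
by exists (Ordinal xk) => //; apply: val_inj.
Qed.

Lemma card_ord_gtn N k : k < N -> #|[set x : 'I_N | k < x]| = N - k.+1.
Proof.
move=> ltkN; have := cardsC [set x : 'I_N | x < k.+1].
rewrite card_ord_ltn // card_ord.
have -> : [set x : 'I_N | k < x] = ~: [set x : 'I_N | x < k.+1].
  by apply/setP => x; rewrite !inE ltnNge.
lia.
Qed.

Lemma perm_on_setC1 (T : finType) (a : T) (u : {perm T}) :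
  perm_on [set~ a] u = (u a == a).
Proof.
apply/subsetP/eqP => [ua | ua x].
  by apply/eqP/negPn/negP => /ua; rewrite !inE eqxx.
by rewrite !inE; apply: contra => /eqP->; rewrite ua.
Qed.

Section SymStabilizer.
Variables (T : finType) (D A : {set T}).
Hypothesis sAD : A \subset D.
Local Open Scope group_scope.

Lemma Sym_astabs_mulg : Sym D :&: 'N(A | 'P) = Sym A * Sym (D :\: A).
Proof.
apply/setP => h; apply/idP/idP.
- case/setIP; rewrite inE => hD hA.
  have hDA : h \in 'N(D :\: A | 'P).
    apply: (subsetP (astabsD _ _ _)); rewrite inE hA andbT.
    by apply/astabsP => x; apply: perm_closed.
  apply/mulsgP; exists (restr_perm A h) (restr_perm (D :\: A) h);
    rewrite ?inE ?restr_perm_on //.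
  apply/permP => x; rewrite permM.
  have [xA|xNA] := boolP (x \in A).
    rewrite (restr_permE hA xA) (out_perm (restr_perm_on (D :\: A) h)) //.
    by rewrite inE (astabs_act _ hA) xA.
  rewrite (out_perm (restr_perm_on A h)) //.
  have [xDA|xNDA] := boolP (x \in D :\: A); first by rewrite restr_permE.
  rewrite (out_perm (restr_perm_on _ _)) // (out_perm hD) //.
  by move: xNDA; rewrite inE xNA.
- case/mulsgP => p q pA qDA ->; rewrite !inE in pA qDA; apply/setIP; split.
    rewrite inE perm_onM //; first exact: subset_trans pA sAD.
    exact: subset_trans qDA (subsetDl _ _).
  rewrite groupM //; apply/astabsP => x /=; rewrite /aperm; first exact: perm_closed.
  have [xDA|xNDA] := boolP (x \in D :\: A); last by rewrite (out_perm qDA).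
  have qxDA : q x \in D :\: A by rewrite perm_closed.
  by move: xDA qxDA; rewrite !inE => /andP[/negbTE-> _] /andP[/negbTE-> _].
Qed.

Lemma card_Sym_astabs : #|Sym D :&: 'N(A | 'P)| = (#|A|`! * #|D :\: A|`!)%N.
Proof.
rewrite Sym_astabs_mulg TI_cardMg ?card_Sym //.
apply/trivgP/subsetP => p; rewrite !inE => /andP[pA pDA]; apply/eqP/permP => x.
have [xA|xNA] := boolP (x \in A); last by rewrite perm1 (out_perm pA).
by rewrite perm1 (out_perm pDA) // inE xA.
Qed.
End SymStabilizer.

Notation o0 := (@Ordinal 3 0 isT).
Notation o1 := (@Ordinal 3 1 isT).
Notation o2 := (@Ordinal 3 2 isT).

Lemma enum_ord3 : enum 'I_3 = [:: o0; o1; o2].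
Proof. by apply: (inj_map val_inj); rewrite val_enum_ord. Qed.

Lemma p132E : [/\ p132 o0 = o0, p132 o1 = o2 & p132 o2 = o1].
Proof.
have i1 : (inord 1 : 'I_3) = o1 by apply: val_inj; rewrite /= inordK.
have i2 : (inord 2 : 'I_3) = o2 by apply: val_inj; rewrite /= inordK.
by rewrite /p132 i1 i2 tpermL tpermR tpermD.
Qed.

Lemma exists_ffun3 (T : finType) (P : T -> T -> T -> bool) :
  [exists f : {ffun 'I_3 -> T}, P (f o0) (f o1) (f o2)] =
  [exists i, exists j, exists l, P i j l].
Proof.
apply/existsP/existsP => [[f Pf] | [i /existsP[j /existsP[l Pijl]]]].
  by exists (f o0); apply/existsP; exists (f o1); apply/existsP; exists (f o2).
by exists [ffun a => if a == o0 then i else if a == o1 then j else l]; rewrite !ffunE.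
Qed.

Lemma occurrence_pat132 n (pi : 'S_n) (Y : seq nat) (idx : 'I_3 -> 'I_n) :
  all (fun y => y < 4) Y ->
  occurrence pi (pat [::] Y) idx =
  [&& idx o0 < idx o1 < idx o2, pi (idx o0) < pi (idx o2) < pi (idx o1) &
      all (fun y => ext_val pi idx y.+1 == (ext_val pi idx y).+1) Y].
Proof.
move=> Y4; rewrite /occurrence /=.
rewrite (forall_in_val_set (fun x => ext_pos idx x.+1 == (ext_pos idx x).+1)) //.
rewrite (forall_in_val_set (fun y => ext_val pi idx y.+1 == (ext_val pi idx y).+1)) //.
rewrite !forall_enum enum_ord3 /= !forall_enum enum_ord3 /=; case: p132E => -> -> ->.
congr [&& _, _ & _].
- move: (nat_of_ord (idx o0)) (nat_of_ord (idx o1)) (nat_of_ord (idx o2)) => i j l.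
  apply/idP/idP; lia.
- rewrite /= !eqb_id !eqbF_neg.
  move: (nat_of_ord (pi (idx o0))) (nat_of_ord (pi (idx o1))) (nat_of_ord (pi (idx o2))) => a b c.
  apply/idP/idP; lia.
Qed.

Lemma ext_val_132 n (pi : 'S_n) (idx : 'I_3 -> 'I_n) :
  pi (idx o0) < pi (idx o2) < pi (idx o1) ->
  ext_val pi idx =1 nth n.+1 [:: 0; (pi (idx o0)).+1; (pi (idx o2)).+1; (pi (idx o1)).+1].
Proof.
move=> ord y; rewrite /ext_val enum_ord3 [map _ _]/=.
move: ord; move: (nat_of_ord _) (nat_of_ord _) (nat_of_ord _) => a b c ord.
rewrite sort_leq3; last by rewrite !ltnS; apply/andP; split; lia.
by case: y => [|[|[|[|y]]]] //; rewrite !ltnS ltn0 /= nth_nil.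
Qed.

Lemma perm_lt_max n' (pi : 'S_n'.+1) j l : pi j = ord_max -> l != j -> pi l < n'.
Proof.
move=> pj_max lj; have : pi l != ord_max by rewrite -pj_max (inj_eq perm_inj).
by rewrite -(inj_eq val_inj) /=; have := ltn_ord (pi l); lia.
Qed.

Lemma occurrence_pat3 n' (pi : 'S_n'.+1) (idx : 'I_3 -> 'I_n'.+1) :
  occurrence pi (pat [::] [:: 3]) idx =
  [&& idx o0 < idx o1 < idx o2, pi (idx o0) < pi (idx o2) & pi (idx o1) == ord_max].
Proof.
rewrite occurrence_pat132 //; case: (idx o0 < idx o1 < idx o2) / andP => //= -[_ lt12].
have [ord|nord] := boolP (pi (idx o0) < pi (idx o2) < pi (idx o1)).
  rewrite /= !ext_val_132 //= andbT eqSS -(inj_eq val_inj) /=.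
  by case/andP: ord => -> _.
apply/esym/negbTE; apply: contra nord => /andP[-> /eqP pj_max] /=.
rewrite pj_max; apply: perm_lt_max pj_max _.
by rewrite -(inj_eq val_inj) /= gtn_eqF.
Qed.

Lemma occurrence_pat13 n' (pi : 'S_n'.+1) (idx : 'I_3 -> 'I_n'.+1) :
  occurrence pi (pat [::] [:: 1; 3]) idx =
  [&& idx o0 < idx o1 < idx o2, pi (idx o2) == (pi (idx o0)).+1 :> nat
    & pi (idx o1) == ord_max].
Proof.
rewrite occurrence_pat132 //; case: (idx o0 < idx o1 < idx o2) / andP => //= -[_ lt12].
have [ord|nord] := boolP (pi (idx o0) < pi (idx o2) < pi (idx o1)).
  by rewrite /= !ext_val_132 //= andbT !eqSS -(inj_eq val_inj) [n' == _]eq_sym.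
apply/esym/negbTE; apply: contra nord => /andP[/eqP adj /eqP pj_max].
rewrite adj ltnSn -adj pj_max /=; apply: perm_lt_max pj_max _.
by rewrite -(inj_eq val_inj) /= gtn_eqF.
Qed.

Lemma contains_pat3 n' (pi : 'S_n'.+1) :
  contains pi (pat [::] [:: 3]) =
  [exists i : 'I_n'.+1, exists j : 'I_n'.+1, exists l : 'I_n'.+1,
     [&& i < j < l, pi i < pi l & pi j == ord_max]].
Proof.
rewrite /contains (eq_existsb (fun f : {ffun 'I_3 -> 'I_n'.+1} => occurrence_pat3 pi f)).
exact: (exists_ffun3 (fun i j l : 'I_n'.+1 => [&& i < j < l, pi i < pi l & pi j == ord_max])).
Qed.

Lemma contains_pat13 n' (pi : 'S_n'.+1) :
  contains pi (pat [::] [:: 1; 3]) = contains pi (pat [::] [:: 3]).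
Proof.
rewrite contains_pat3 /contains.
rewrite (eq_existsb (fun f : {ffun 'I_3 -> 'I_n'.+1} => occurrence_pat13 pi f)).
rewrite (exists_ffun3 (fun i j l : 'I_n'.+1 =>
  [&& i < j < l, pi l == (pi i).+1 :> nat & pi j == ord_max])).
apply/existsP/existsP => -[i /existsP[j /existsP[l /and3P[ijl pil pj_max]]]].
  by exists i; apply/existsP; exists j; apply/existsP; exists l; rewrite ijl (eqP pil) ltnSn.
pose P v := (pi^-1)%g (inord v) < j.
have P_pi x : P (pi x) = (x < j) by rewrite /P inord_val permK.
case/andP: ijl => lt_ij lt_jl; move/eqP: pj_max => pj_max.
have [v /andP[le_iv lt_vl] /andP[Pv nPv1]] : exists2 v, pi i <= v < pi l & P v && ~~ P v.+1.
  apply: exists_pred_switch; first exact: ltnW.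
    by rewrite P_pi.
  by rewrite P_pi -leqNgt ltnW.
have lt_l_max : pi l < n'.
  by apply: perm_lt_max pj_max _; rewrite -(inj_eq val_inj) /= gtn_eqF.
set i' := (pi^-1)%g (inord v); set l' := (pi^-1)%g (inord v.+1).
have pi_i' : pi i' = v :> nat by rewrite permKV inordK //; lia.
have pi_l' : pi l' = v.+1 :> nat by rewrite permKV inordK //; lia.
have lt_jl' : j < l'.
  have nlt_l'j : ~~ (l' < j) := nPv1.
  rewrite ltn_neqAle leqNgt nlt_l'j andbT.
  by apply: contraTneq lt_l_max => /val_inj jl'; move: pi_l'; rewrite -jl' pj_max /=; lia.
have lt_i'j : i' < j := Pv.
exists i'; apply/existsP; exists j; apply/existsP; exists l'.
by rewrite lt_i'j lt_jl' pi_l' pi_i' pj_max !eqxx.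
Qed.

Section SkewAtMax.
Variables (n' : nat) (m : 'I_n'.+1).

Definition ord_gtn : {set 'I_n'.+1} := [set x : 'I_n'.+1 | m < x].

Lemma card_setC1D_ord_gtn : #|[set~ m] :\: ord_gtn| = m.
Proof.
have -> : [set~ m] :\: ord_gtn = [set x : 'I_n'.+1 | x < m].
  by apply/setP => x; rewrite !inE -leqNgt andbC -(inj_eq val_inj) -ltn_neqAle.
by apply: card_ord_ltn; apply: ltnW.
Qed.

(* pi is the skew sum of its two blocks around n, which sits at position m. *)
Definition skew_at : {set 'S_n'.+1} :=
  [set pi : 'S_n'.+1 | (pi m == ord_max) && [forall x, (pi x < n' - m) == (m < x)]].

Definition skew_ref : 'S_n'.+1 :=
  (perm (@rev_ord_inj n'.+1) * tperm (inord (n' - m)) ord_max)%g.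

Let val_inord_sub : val (inord (n' - m) : 'I_n'.+1) = n' - m.
Proof. by rewrite /= inordK // ltnS leq_subr. Qed.

Lemma skew_ref_max : skew_ref m = ord_max.
Proof.
have rev_m : rev_ord m = inord (n' - m) by apply: val_inj; rewrite val_inord_sub.
by rewrite permM (permE (@rev_ord_inj _)) rev_m tpermL.
Qed.

Lemma skew_ref_low x : (skew_ref x < n' - m) = (m < x).
Proof.
rewrite permM (permE (@rev_ord_inj _)); have := ltn_ord x; have := ltn_ord m.
case: tpermP => [/(congr1 val)|/(congr1 val)|_ _] /=; rewrite ?val_inord_sub; lia.
Qed.

Lemma skew_at_rcoset : skew_at = ((Sym [set~ m] :&: 'N(ord_gtn | 'P)) :* skew_ref)%g.
Proof.
move: skew_ref skew_ref_max skew_ref_low => s s_max s_low.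
apply/setP => pi; rewrite mem_rcoset in_setI [in LHS]inE [in RHS]inE perm_on_setC1.
set h := (pi * s^-1)%g; rewrite -[pi](mulgKV s) -/h; clearbody h.
rewrite permM -s_max (inj_eq perm_inj); congr (_ && _).
apply/forallP/astabsP => [stab x | stab x]; rewrite /= /aperm.
  by rewrite !inE -(eqP (stab x)) permM /= s_low.
by rewrite permM s_low; have := stab x; rewrite !inE => ->.
Qed.

Lemma card_skew_at : #|skew_at| = m`! * (n' - m)`!.
Proof.
rewrite skew_at_rcoset card_rcoset card_Sym_astabs.
  by rewrite card_setC1D_ord_gtn card_ord_gtn // subSS mulnC.
by apply/subsetP => x; rewrite !inE; apply: contraTneq => ->; rewrite ltnn.
Qed.

Lemma skew_atP (pi : 'S_n'.+1) : pi m = ord_max ->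
  reflect (forall i l : 'I_n'.+1, i < m < l -> pi l < pi i) (pi \in skew_at).
Proof.
move=> pi_m; rewrite inE pi_m eqxx /=; apply: (iffP forallP) => [low i l | sep x].
  case/andP=> lt_im lt_ml; have /eqP := low i; have /eqP := low l.
  have ge_mi : (m < i) = false by rewrite ltnNge ltnW.
  rewrite lt_ml ge_mi => lt_l /negbT; rewrite -leqNgt; exact: leq_trans lt_l.
pose B := [set y : 'I_n'.+1 | pi y < n' - m].
have card_B : #|B| = n' - m.
  have -> : B = pi @^-1: [set y : 'I_n'.+1 | y < n' - m] by apply/setP => y; rewrite !inE.
  rewrite card_preimset; last exact: perm_inj.
  by rewrite card_ord_ltn // leqW ?leq_subr.
have sub_B : B \subset ord_gtn.
  apply/subsetP => y; rewrite !inE; case: (ltngtP m y) => // [lt_ym | /val_inj <-]; last first.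
    by rewrite pi_m /= ltnNge leq_subr.
  move=> low_y; suff : #|y |: ord_gtn| <= #|B|.
    by rewrite cardsU1 card_ord_gtn // card_B inE ltnNge (ltnW lt_ym) subSS ltnn.
  apply/subset_leq_card/subsetP => l; rewrite !inE => /orP[/eqP-> // | lt_ml].
  by apply: ltn_trans low_y; apply: sep; rewrite lt_ym.
have /eqP/setP/(_ x) : B == ord_gtn.
  by rewrite eqEcard sub_B card_ord_gtn // card_B subSS leqnn.
by rewrite !inE => ->.
Qed.

End SkewAtMax.

Lemma avoid_pat3_skew n' (pi : 'S_n'.+1) :
  ~~ contains pi (pat [::] [:: 3]) = (pi \in skew_at ((pi^-1)%g ord_max)).
Proof.
have pi_m : pi ((pi^-1)%g ord_max) = ord_max by rewrite permKV.
move: ((pi^-1)%g ord_max) pi_m => m pi_m.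
apply/idP/(skew_atP pi_m); rewrite contains_pat3.
- move=> /existsPn avoid i l /andP[lt_im lt_ml]; rewrite ltnNge leq_eqVlt negb_or.
  apply/andP; split.
    by rewrite (inj_eq val_inj) (inj_eq perm_inj) -(inj_eq val_inj) ltn_eqF // (ltn_trans lt_im).
  apply: contraT => /negbNE lt_il; have /existsPn/(_ m)/existsPn/(_ l) := avoid i.
  by rewrite lt_im lt_ml lt_il pi_m eqxx.
- move=> sep; apply/existsPn => i; apply/existsPn => j; apply/existsPn => l.
  apply/negP => /and3P[/andP[lt_ij lt_jl] lt_il /eqP pi_j].
  have j_m : j = m by apply: (@perm_inj _ pi); rewrite pi_j pi_m.
  by move: (sep i l); rewrite -j_m lt_ij lt_jl => /(_ isT); rewrite ltnNge ltnW.
Qed.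

Lemma card_avoid_pat3 n' :
  avoid_count n'.+1 (pat [::] [:: 3]) = \sum_(m < n'.+1) m`! * (n' - m)`!.
Proof.
rewrite /avoid_count -sum1_card.
rewrite (partition_big (fun pi : 'S_n'.+1 => (pi^-1)%g ord_max) xpredT) //=.
apply: eq_bigr => m _; rewrite -card_skew_at -sum1_card; apply: eq_bigl => pi.
rewrite inE avoid_pat3_skew.
have [<-|ne_m] := eqVneq ((pi^-1)%g ord_max) m; first by rewrite andbT.
rewrite andbF; apply/esym/negbTE; apply: contra ne_m; rewrite inE => /andP[/eqP <- _].
by rewrite permK.
Qed.

Theorem mainTheorem8 (n : nat) : 0 < n ->
  avoid_count n (pat [::] [:: 3]) = \sum_(1 <= k < n.+1) (k.-1)`! * (n - k)`! /\
  avoid_count n (pat [::] [:: 1; 3]) = \sum_(1 <= k < n.+1) (k.-1)`! * (n - k)`!.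
Proof.
case: n => [//|n'] _.
have -> : \sum_(1 <= k < n'.+2) (k.-1)`! * (n'.+1 - k)`! =
          \sum_(m < n'.+1) m`! * (n' - m)`!.
  by rewrite big_add1 /= big_mkord; apply: eq_bigr => k _; rewrite subSS.
split; first exact: card_avoid_pat3.
rewrite -card_avoid_pat3; apply: eq_card => pi.
by rewrite !inE contains_pat13.
Qed.
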